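(* The absolute random order ratio of Best Fit satisfies $RR_{\mathrm{BF}} \ge 1.30$.
   Context: Bin packing: given a list $I=(x_1,\ldots,x_n)$ of items with sizes in $(0,1]$, a packing assigns items to unit-capacity bins so that the total size of items in each bin is at most $1$. $\mathrm{OPT}(I)$ denotes the minimum number of bins in a feasible packing. The online algorithm Best Fit (BF) processes the items in the given order and packs the current item into the fullest bin (largest current load) into which it fits, opening a new bin if it fits into no existing bin; items are never moved. $\mathrm{BF}(I)$ denotes the number of bins Best Fit uses on list $I$. For $\sigma\in\mathcal{S}_n$ (permutations of $[n]$), $I^\sigma=(x_{\sigma(1)},\ldots,x_{\sigma(n)})$. With $\mathcal{I}$ the set of all finite item lists and $\sigma$ uniformly random in $\mathcal{S}_n$, the absolute random order ratio is $$RR_{\mathrm{BF}}=\sup_{I\in\mathcal{I}}\frac{\mathbb{E}[\mathrm{BF}(I^\sigma)]}{\mathrm{OPT}(I)}.$$ *)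

From HB Require Import structures.
From mathcomp Require Import all_boot all_order all_algebra.
From mathcomp Require Import fingroup perm.
From mathcomp Require Import reals.
Set Implicit Arguments. Unset Strict Implicit. Unset Printing Implicit Defensive.
Import Order.TTheory GRing.Theory Num.Theory.
Local Open Scope ring_scope.

Section BinPacking.
Variable R : realType.

Definition valid_items (I : seq R) : bool := all (fun x => (0 < x) && (x <= 1)) I.

(* State of Best Fit: the sequence of current bin loads (in opening order). *)

Fixpoint add_to_first (s : seq R) (m x : R) : seq R :=
  match s with
  | [::] => [::]
  | l :: s' => if l == m then (l + x) :: s' else l :: add_to_first s' m x
  end.

(* One Best Fit step: among the bins into which x fits (load + x <= 1),
   put x into one of largest load; if none, open a new bin.  (Ties are
   broken by lowest index; this does not affect the number of bins.) *)
Definition bf_step (s : seq R) (x : R) : seq R :=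
  let f := [seq l <- s | l + x <= 1] in
  if f is l0 :: _ then add_to_first s (foldl Num.max l0 f) x
  else rcons s x.

Definition BF (I : seq R) : nat := size (foldl bf_step [::] I).

Definition packable (I : seq R) (k : nat) : bool :=
  [exists f : {ffun 'I_(size I) -> 'I_k},
     [forall j : 'I_k, \sum_(i < size I | f i == j) nth 0 I i <= 1]].

(* OPT I = least k with I packable into k bins (searched in 0..size I;
   for valid I, k = size I always works, so this is the true minimum). *)
Definition OPT (I : seq R) : nat := find (packable I) (iota 0 (size I).+1).

Definition permute (I : seq R) (s : 'S_(size I)) : seq R :=
  [seq nth 0 I (s i) | i <- enum 'I_(size I)].


Definition E_BF (I : seq R) : R :=
  (\sum_(s : 'S_(size I)) (BF (@permute I s))%:R) / ((size I)`!)%:R.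

Definition rr_ratio (I : seq R) : R := E_BF I / (OPT I)%:R.

End BinPacking.

From HB Require Import structures.
From mathcomp Require Import all_boot all_order all_algebra.
From mathcomp Require Import fingroup perm.
From mathcomp Require Import reals.
From mathcomp Require Import lra.
Import Order.TTheory GRing.Theory Num.Theory.
Set Implicit Arguments. Unset Strict Implicit. Unset Printing Implicit Defensive.

(* Take three items of size 1/3 and two of size 5/12, so that OPT = 2. Best Fit
   ends with two bins when the first two items of the order have equal size and
   with three bins otherwise. The first two positions of a uniformly random
   order hold a uniformly random ordered pair of distinct items, so two bins
   occur with probability (3*2 + 2*1)/(5*4) = 2/5. Hence E[BF] = 13/5 and the
   ratio is 13/10. Best Fit on these rational sizes is simulated exactly by
   Best Fit on the integer sizes 4 and 5 with capacity 12. *)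

Section PermutedPairs.
Variable n : nat.

Lemma perm_pair_exists (i0 i1 j k : 'I_n) : i0 != i1 -> j != k ->
  exists s : 'S_n, s i0 = j /\ s i1 = k.
Proof.
move=> ne_i ne_jk; set a := tperm i0 j i1.
have ne_aj : a != j.
  by rewrite -[j](tpermL i0) (inj_eq perm_inj) eq_sym.
exists (tperm i0 j * tperm a k)%g; rewrite !permM tpermL; split.
  by rewrite tpermD // eq_sym.
exact: tpermL.
Qed.

Lemma sum_perm_pair_invariant (F : 'I_n -> 'I_n -> nat) (i0 i1 j k : 'I_n) :
  i0 != i1 -> j != k ->
  \sum_(s : 'S_n) F (s i0) (s i1) = \sum_(s : 'S_n) F (s j) (s k).
Proof.
move=> ne_i ne_jk; have [p [pi0 pi1]] := perm_pair_exists ne_i ne_jk.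
rewrite (reindex_inj (mulgI p)) /=.
by apply: eq_bigr => s _; rewrite !permM pi0 pi1.
Qed.

Lemma sum_perm_pair (F : 'I_n -> 'I_n -> nat) (i0 i1 : 'I_n) : i0 != i1 ->
  (\sum_(s : 'S_n) F (s i0) (s i1)) * (n * n.-1)
  = n`! * \sum_(j < n) \sum_(k < n | k != j) F j k.
Proof.
move=> ne_i.
have count_pairs : \sum_(j < n) \sum_(k < n | k != j) 1 = n * n.-1.
  rewrite (eq_bigr (fun _ => n.-1)) ?sum_nat_const ?card_ord // => j _.
  by rewrite sum1_card cardC1 card_ord.
rewrite -count_pairs big_distrr /=.
rewrite (eq_bigr (fun j => \sum_(k < n | k != j) \sum_(s : 'S_n) F (s j) (s k))).
  rewrite (eq_bigr (fun j => \sum_(s : 'S_n) \sum_(k < n | k != j) F (s j) (s k)));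
    last by move=> j _; rewrite exchange_big.
  rewrite exchange_big (eq_bigr (fun _ => \sum_(j < n) \sum_(k < n | k != j) F j k)).
    by rewrite sum_nat_const card_Sn mulnC.
  move=> s _; rewrite [RHS](reindex_inj (@perm_inj _ s)); apply: eq_bigr => j _.
  rewrite [RHS](reindex_inj (@perm_inj _ s)).
  by apply: eq_bigl => k; rewrite (inj_eq perm_inj).
move=> j _; rewrite big_distrr /=; apply: eq_bigr => k ne_kj.
by rewrite muln1 (sum_perm_pair_invariant (j := j) (k := k) F ne_i) // eq_sym.
Qed.

End PermutedPairs.

Lemma nth_map_ord_enum (T : Type) (x0 : T) n (F : 'I_n -> T) (i : 'I_n) :
  nth x0 [seq F j | j <- enum 'I_n] i = F i.
Proof. by rewrite (nth_map i) ?size_enum_ord // nth_ord_enum. Qed.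

Lemma perm_eq_nth_perm (T : eqType) (x0 : T) (s : seq T) (p : 'S_(size s)) :
  perm_eq [seq nth x0 s (p i) | i <- enum 'I_(size s)] s.
Proof.
rewrite -[s in perm_eq _ s](mkseq_nth x0) /mkseq -val_enum_ord.
rewrite (map_comp (nth x0 s) (val \o p)) (map_comp val p) !perm_map //.
apply: uniq_perm; rewrite ?enum_uniq ?(map_inj_uniq perm_inj) ?enum_uniq // => i.
rewrite mem_enum; apply/mapP; exists (p^-1 i)%g; by rewrite ?mem_enum ?permKV.
Qed.

Fixpoint add_to_first_nat (s : seq nat) (m x : nat) : seq nat :=
  match s with
  | [::] => [::]
  | l :: s' => if l == m then (l + x) :: s' else l :: add_to_first_nat s' m x
  end.

Definition bf_step_nat (d : nat) (s : seq nat) (x : nat) : seq nat :=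
  let f := [seq l <- s | l + x <= d] in
  if f is l0 :: _ then add_to_first_nat s (foldl maxn l0 f) x else rcons s x.

Definition BF_nat (d : nat) (w : seq nat) : nat := size (foldl (bf_step_nat d) [::] w).

Local Open Scope ring_scope.

Section ScaledItems.
Variables (R : realType) (d : nat).
Hypothesis d_gt0 : (0 < d)%N.

Definition scaled (n : nat) : R := n%:R / d%:R.

Lemma scaledD a b : scaled (a + b) = scaled a + scaled b.
Proof. by rewrite /scaled natrD mulrDl. Qed.

Lemma ler_scaled a b : (scaled a <= scaled b) = (a <= b)%N.
Proof. by rewrite /scaled ler_pM2r ?invr_gt0 ?ltr0n // ler_nat. Qed.

Lemma scaled_le1 n : (scaled n <= 1) = (n <= d)%N.
Proof. by rewrite /scaled ler_pdivrMr ?ltr0n // mul1r ler_nat. Qed.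

Lemma scaled_gt0 n : (0 < scaled n) = (0 < n)%N.
Proof. by rewrite /scaled pmulr_lgt0 ?invr_gt0 ?ltr0n. Qed.

Lemma scaled_inj : injective scaled.
Proof. by move=> a b eq_ab; apply/eqP; rewrite eqn_leq -!ler_scaled eq_ab lexx. Qed.

Lemma scaled_max a b : scaled (maxn a b) = Num.max (scaled a) (scaled b).
Proof.
case: (leqP a b) => [le_ab | /ltnW le_ba].
  by rewrite max_r ?ler_scaled.
by rewrite max_l ?ler_scaled.
Qed.

Lemma sum_scaled (s : seq nat) : \sum_(x <- map scaled s) x = scaled (sumn s).
Proof. by rewrite big_map sumnE /scaled natr_sum mulr_suml. Qed.

Lemma sum_nth_scaled (s : seq nat) (P : pred 'I_(size (map scaled s))) :
  \sum_(i < size (map scaled s) | P i) nth 0 (map scaled s) i =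
  scaled (\sum_(i < size (map scaled s) | P i) nth 0%N s i).
Proof.
rewrite /scaled natr_sum mulr_suml; apply: eq_bigr => i _.
by rewrite (nth_map 0%N) // -(size_map scaled) ltn_ord.
Qed.

Lemma valid_items_scaled (s : seq nat) :
  valid_items (map scaled s) = all (fun n => (0 < n <= d)%N) s.
Proof.
by rewrite /valid_items all_map; apply: eq_all => n /=; rewrite scaled_gt0 scaled_le1.
Qed.

Lemma add_to_first_scaled s m x :
  add_to_first (map scaled s) (scaled m) (scaled x) = map scaled (add_to_first_nat s m x).
Proof.
elim: s => //= l s IH; rewrite (inj_eq scaled_inj).
by case: eqP => _ /=; rewrite ?scaledD ?IH.
Qed.

Lemma bf_step_scaled s x : bf_step (map scaled s) (scaled x) = map scaled (bf_step_nat d s x).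
Proof.
rewrite /bf_step /bf_step_nat filter_map.
rewrite (eq_filter (a2 := fun l => (l + x <= d)%N)) => [|l]; last first.
  by rewrite /= -scaledD scaled_le1.
have foldl_max l0 t :
    foldl Num.max (scaled l0) (map scaled t) = scaled (foldl maxn l0 t).
  by elim: t l0 => //= y t IH l0; rewrite -scaled_max IH.
case: [seq l <- s | (l + x <= d)%N] => [|l0 t] /=; first by rewrite map_rcons.
by rewrite -scaled_max foldl_max add_to_first_scaled.
Qed.

Lemma BF_scaled w : BF (map scaled w) = BF_nat d w.
Proof.
suff foldl_scaled (s0 : seq nat) :
    foldl (@bf_step R) (map scaled s0) (map scaled w) = map scaled (foldl (bf_step_nat d) s0 w).
  by rewrite /BF /BF_nat -(size_map scaled) -foldl_scaled.
by elim: w s0 => //= x w IH s0; rewrite bf_step_scaled IH.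
Qed.

End ScaledItems.

Section BinPackingFacts.
Variable R : realType.

Lemma packable_sum_le (I : seq R) k : packable I k -> \sum_(x <- I) x <= k%:R.
Proof.
case/existsP=> f /forallP bins_le1.
rewrite (big_nth 0) big_mkord (partition_big f xpredT) //=.
by rewrite -[k in k%:R]card_ord -sum1_card natr_sum ler_sum.
Qed.

Lemma OPT_eq (I : seq R) k : (k <= size I)%N -> packable I k ->
  (forall j, (j < k)%N -> ~~ packable I j) -> OPT I = k.
Proof.
move=> le_k packk below_k; rewrite /OPT -(subnKC (leqW le_k)) iotaD find_cat.
have -> : has (packable I) (iota 0 k) = false.
  by apply/hasPn => j; rewrite mem_iota => /andP[_]; exact: below_k.
by rewrite size_iota subSn //= packk addn0.
Qed.

Lemma permute_map (T : Type) (x0 : T) (f : T -> R) (s : seq T) (p : 'S_(size (map f s))) :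
  permute p = map f [seq nth x0 s (p i) | i <- enum 'I_(size (map f s))].
Proof.
rewrite /permute -map_comp; apply: eq_map => i /=.
by rewrite (nth_map x0) // -(size_map f) ltn_ord.
Qed.

End BinPackingFacts.

Definition items : seq nat := [:: 4; 4; 4; 5; 5].

Definition first_pair_bins (j k : 'I_5) : nat :=
  if nth 0 items j == nth 0 items k then 2 else 3.

Lemma BF_nat_items :
  {in permutations items, forall w, BF_nat 12 w = if nth 0 w 0 == nth 0 w 1 then 2 else 3}%N.
Proof.
suff /allP BF_all : all (fun w => BF_nat 12 w == if nth 0 w 0 == nth 0 w 1 then 2 else 3)%N
                        (permutations items).
  by move=> w /BF_all /eqP.
by vm_compute.
Qed.

Lemma sum_BF_nat_items :
  (\sum_(p : 'S_5) BF_nat 12 [seq nth 0 items (p i) | i <- enum 'I_5] = 312)%N.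
Proof.
have lt1_5 : (1 < 5)%N by [].
have BF_p (p : 'S_5) : BF_nat 12 [seq nth 0 items (p i) | i <- enum 'I_5] =
                       first_pair_bins (p ord0) (p (Ordinal lt1_5)).
  have w_perm := perm_eq_nth_perm 0%N (p : 'S_(size items)).
  rewrite BF_nat_items ?mem_permutations //.
  by rewrite (nth_map_ord_enum 0%N _ ord0) (nth_map_ord_enum 0%N _ (Ordinal lt1_5)).
have sum_pairs : (\sum_(j < 5) \sum_(k < 5 | k != j) first_pair_bins j k = 52)%N.
  by rewrite (eq_bigr _ (fun j _ => big_mkcond _ _)) !big_ord_recr !big_ord0.
rewrite (eq_bigr _ (fun p _ => BF_p p)); apply/eqP.
rewrite -(eqn_pmul2r (_ : 0 < 5 * 5.-1)%N) //.
by rewrite (sum_perm_pair _ (isT : ord0 != Ordinal lt1_5)) sum_pairs.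
Qed.

Section Instance.
Variable R : realType.

Let I : seq R := map (scaled R 12) items.

Lemma E_BF_instance : E_BF I = 312%:R / 120%:R.
Proof.
rewrite /E_BF -natr_sum -sum_BF_nat_items; congr (_%:R / _%:R).
by apply: eq_bigr => p _; rewrite (permute_map 0%N) BF_scaled.
Qed.

Lemma OPT_instance : OPT I = 2%N.
Proof.
apply: OPT_eq => // [|j lt_j2]; last first.
  have le_j1 : j%:R <= 1 :> R by rewrite lern1 -ltnS.
  apply/negP => /packable_sum_le; rewrite sum_scaled // => /le_trans /(_ le_j1).
  by rewrite scaled_le1.
apply/existsP; exists [ffun i : 'I_5 => if (i < 3)%N then ord0 else ord_max : 'I_2].
apply/forallP => j; rewrite sum_nth_scaled // scaled_le1 // big_mkcond.
by rewrite !big_ord_recr big_ord0 /= !ffunE; case: j => [[|[|]]].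
Qed.

End Instance.

Theorem theorem5 (R : realType) (c : R) :
  c < 13%:R / 10%:R ->
  exists I : seq R, [/\ valid_items I, (0 < size I)%N & c < rr_ratio I].
Proof.
move=> lt_c; exists (map (scaled R 12) items); split.
- by rewrite valid_items_scaled.
- by [].
- by rewrite /rr_ratio E_BF_instance OPT_instance; lra.
Qed.
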